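(* Let $n\ge 2$ and let $\mathcal{F}_1,\dots,\mathcal{F}_n$ be collections of axis-parallel boxes in $\mathbb{R}^d$. Suppose there exists $j\in[d]$ such that for all $\ell\neq k$ in $[n]$, all $B\in\mathcal{F}_\ell$ and all $B'\in\mathcal{F}_k$, we have $\Pi_j(B)\cap\Pi_j(B')\neq\emptyset$. Then there exists $S\subseteq[n]$ with $|S|\ge n-1$ such that for every $i\in S$ there is a hyperplane orthogonal to the $j$-th coordinate axis (i.e., of the form $\{x\in\mathbb{R}^d: x_j=c\}$) that meets every box of $\mathcal{F}_i$.
   Context: An axis-parallel box in $\mathbb{R}^d$ is a set $B=[\alpha_1,\beta_1]\times\dots\times[\alpha_d,\beta_d]$ with real $\alpha_j\le\beta_j$; $\Pi_j(B)=[\alpha_j,\beta_j]$ denotes its projection onto the $j$-th coordinate axis. *)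

From HB Require Import structures.
From mathcomp Require Import all_boot all_order all_algebra.
From mathcomp Require Import boolp classical_sets reals.
Set Implicit Arguments. Unset Strict Implicit. Unset Printing Implicit Defensive.
Import Order.TTheory GRing.Theory Num.Theory.
Local Open Scope classical_set_scope.
Local Open Scope ring_scope.

Definition is_box (R : realType) (d : nat) (B : set ('I_d -> R)) : Prop :=
  exists a b : 'I_d -> R, (forall k, a k <= b k) /\
    B = [set x | forall k, a k <= x k <= b k].

Definition proj (R : realType) (d : nat) (j : 'I_d) (B : set ('I_d -> R)) : set R :=
  (fun x => x j) @` B.

Definition hyp_meets (R : realType) (d : nat) (j : 'I_d) (c : R) (B : set ('I_d -> R)) : Prop :=
  exists x, B x /\ x j = c.

From HB Require Import structures.
From mathcomp Require Import all_boot all_order all_algebra.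
From mathcomp Require Import boolp classical_sets set_interval reals.
From mathcomp Require Import lra.
Set Implicit Arguments. Unset Strict Implicit. Unset Printing Implicit Defensive.
Import Order.TTheory GRing.Theory Num.Theory.
Local Open Scope classical_set_scope.
Local Open Scope ring_scope.

(** Projected to the axis [j], each box is a closed interval. A family of
    pairwise intersecting closed intervals has a common point (the supremum of
    the left endpoints), so a family that cannot be pierced contains two boxes
    whose projections are disjoint, one strictly left of the other. If two
    distinct families [i] and [k] both had such pairs [A1 < A2] and [C1 < C2],
    the hypothesis would give points [p] in [A2] and [C1] and [q] in [A1] and
    [C2], whence [q < p < q]. So at most one family is not pierced. *)

Definition left_of disp (T : porderType disp) (A B : set T) : Prop :=
  forall x y, A x -> B y -> (x < y)%O.

Lemma left_of_cross disp (T : porderType disp) (A1 A2 C1 C2 : set T) :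
  left_of A1 A2 -> left_of C1 C2 ->
  A2 `&` C1 !=set0 -> A1 `&` C2 !=set0 -> False.
Proof.
move=> lA lC [p [A2p C1p]] [q [A1q C2q]].
by have := lt_trans (lA _ _ A1q A2p) (lC _ _ C1p C2q); rewrite ltxx.
Qed.

Lemma all_but_one_set (T : finType) (P : T -> Prop) :
  (forall i k, ~ P i -> ~ P k -> i = k) ->
  exists S : {set T}, (#|T| - 1 <= #|S|)%N /\ forall i, i \in S -> P i.
Proof.
move=> uniqNP; have [[i0 Ni0]|allP] := pselect (exists i, ~ P i).
  exists [set~ i0]%SET; rewrite cardsC1 subn1; split=> // i.
  rewrite !inE => /eqP ii0; apply: contrapT => Ni.
  exact: ii0 (uniqNP _ _ Ni Ni0).
exists [set: T]%SET; rewrite cardsT leq_subr; split=> // i _.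
by apply: contrapT => Ni; apply: allP; exists i.
Qed.

Section ClosedIntervals.
Variable R : realType.
Implicit Types a b c d : R.

Lemma setI_itvcc_neq0 a b c d :
  `[a, b] `&` `[c, d] !=set0 <-> [/\ a <= b, c <= d, a <= d & c <= b].
Proof.
rewrite !set_itvcc; split.
  by case=> x [/andP[ax xb] /andP[cx xd]]; split; lra.
case=> ab cd ad cb; have [ac|ca] := leP a c.
  by exists c; rewrite /= ac cb lexx cd.
by exists a; rewrite /= lexx ab (ltW ca) ad.
Qed.

Lemma itvcc_disjoint_left_of a b c d :
  ~ (`[a, b] `&` `[c, d] !=set0) ->
  left_of `[a, b] `[c, d] \/ left_of `[c, d] `[a, b].
Proof.
rewrite setI_itvcc_neq0 !set_itvcc => disj.
have [ba|ab] := ltP b a; first by left=> x y /= /andP[]; lra.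
have [dc|cd] := ltP d c; first by right=> x y /= /andP[]; lra.
have [da|ad] := ltP d a; first by right=> x y /= /andP[? ?] /andP[]; lra.
have [bc|cb] := ltP b c; first by left=> x y /= /andP[? ?] /andP[]; lra.
by exfalso; apply: disj.
Qed.

Lemma itvcc_pairwise_meet_common (I : set (set R)) :
  (forall A, I A -> exists a b, A = `[a, b]%classic) ->
  (forall A B, I A -> I B -> A `&` B !=set0) ->
  exists c, forall A, I A -> A c.
Proof.
move=> itvI meetI.
pose L := [set a | exists b, I `[a, b]%classic].
have leL a b : I `[a, b]%classic -> ubound L b.
  by move=> Iab a' [b' Ia'b']; have /setI_itvcc_neq0[] := meetI _ _ Ia'b' Iab.
exists (sup L) => A IA; have [a [b eA]] := itvI _ IA; subst A.
have La : L a by exists b.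
have /setI_itvcc_neq0[ab _ _ _] := meetI _ _ IA IA.
rewrite set_itvcc /=; apply/andP; split.
  by apply: ub_le_sup => //; exists b; exact: leL IA.
exact: ge_sup (ex_intro _ a La) (leL _ _ IA).
Qed.

End ClosedIntervals.

Section BoxFamily.
Variables (R : realType) (d : nat) (j : 'I_d).

Lemma proj_box (B : set ('I_d -> R)) :
  is_box B -> exists a b : R, proj j B = `[a, b]%classic.
Proof.
case=> a [b [ab ->]]; exists (a j), (b j); rewrite set_itvcc.
apply/seteqP; split=> [_ [x xB <-]|t /andP[lo hi]]; first exact: xB.
exists (fun k => if k == j then t else a k); last by rewrite eqxx.
by move=> k; case: eqP => [->|_]; rewrite ?lo ?hi // lexx ab.
Qed.

Lemma hyp_meets_proj (c : R) (B : set ('I_d -> R)) :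
  hyp_meets j c B <-> proj j B c.
Proof. by split=> [[x [Bx <-]]|[x Bx <-]]; exists x. Qed.

Lemma boxes_pierced_or_split (G : set (set ('I_d -> R))) :
  (forall B, G B -> is_box B) ->
  (exists c, forall B, G B -> hyp_meets j c B) \/
  exists B B', [/\ G B, G B' & left_of (proj j B) (proj j B')].
Proof.
move=> boxG.
have [meetG|] := pselect (forall B B', G B -> G B' -> proj j B `&` proj j B' !=set0).
  left; have [c projc] : exists c, forall A, (proj j @` G) A -> A c.
    apply: itvcc_pairwise_meet_common => [_ [B GB <-]|_ _ [B GB <-] [B' GB' <-]].
      exact: proj_box (boxG _ GB).
    exact: meetG.
  by exists c => B GB; apply/hyp_meets_proj; apply: projc; exists B.
move=> /existsNP[B /existsNP[B' /not_implyP[GB /not_implyP[GB' disj]]]]; right.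
have [a [b eB]] := proj_box (boxG _ GB); have [a' [b' eB']] := proj_box (boxG _ GB').
move: disj; rewrite eB eB' => /itvcc_disjoint_left_of[l|l].
  by exists B, B'; rewrite eB eB'.
by exists B', B; rewrite eB eB'.
Qed.

End BoxFamily.

Theorem lemma2 (R : realType) (d n : nat) (F : 'I_n -> set (set ('I_d -> R)))
  (hn : (2 <= n)%N)
  (hbox : forall i B, F i B -> is_box B)
  (j : 'I_d)
  (hj : forall l k : 'I_n, l != k -> forall B B', F l B -> F k B' ->
          proj j B `&` proj j B' !=set0) :
  exists S : {set 'I_n}, (n - 1 <= #|S|)%N /\
    forall i, i \in S -> exists c : R, forall B, F i B -> hyp_meets j c B.
Proof.
pose pierced i := exists c : R, forall B, F i B -> hyp_meets j c B.
have unpierced_split i : ~ pierced i ->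
    exists B B', [/\ F i B, F i B' & left_of (proj j B) (proj j B')].
  by case: (boxes_pierced_or_split j (hbox i)).
have [|S [cardS pierceS]] := @all_but_one_set _ pierced.
  move=> i k /unpierced_split[A1 [A2 [FA1 FA2 lA]]].
  move=> /unpierced_split[C1 [C2 [FC1 FC2 lC]]].
  apply: contrapT => /eqP ik.
  exact: left_of_cross lA lC (hj _ _ ik _ _ FA2 FC1) (hj _ _ ik _ _ FA1 FC2).
by rewrite card_ord in cardS; exists S.
Qed.
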